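(* In the periodic lock scheduling problem, there exists an optimal schedule $\sigma$ such that no two consecutive periods $t$ and $t+1$ both have $\sigma(t)=\sigma(t+1)=W$.
   Context: Periodic lock scheduling problem. Time is discrete, periods $t=1,2,\dots$. There are $k$ vessel streams; stream $i$ has a direction $\delta_i\in\{D,U\}$, an integer periodicity $\lambda_i\ge1$ and an integer offset $1\le\mu_i\le\lambda_i$; $a_i(t)=1$ if $t\equiv\mu_i\pmod{\lambda_i}$ and $0$ otherwise, $a_\delta(t)=\sum_{i:\delta_i=\delta}a_i(t)$. A schedule is a sequence $\sigma=(\sigma(t))_{t\ge1}$ with $\sigma(t)\in\{D,U,W\}$ ($D$: process downstream waiting vessels and switch alignment from downstream to upstream; $U$ symmetrically; $W$: wait at current alignment); the initial orientation is arbitrary; it is feasible if the non-$W$ actions alternate between $D$ and $U$. Queue lengths: $n_D(0)=n_U(0)=0$ and for $t\ge1$, $n_\delta(t)=0$ if $\sigma(t)=\delta$ and $n_\delta(t)=n_\delta(t-1)+a_\delta(t)$ otherwise. $C_\sigma(t)=n_D(t)+n_U(t)$ and $C_{\mathrm{avg},\sigma}=\lim_{T\to\infty}\frac1T\sum_{t=1}^TC_\sigma(t)$. A schedule is optimal if it is feasible and minimizes $C_{\mathrm{avg},\sigma}$ over all feasible schedules. *)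

From Stdlib Require Import Reals Arith Lia.
From Coquelicot Require Import Coquelicot.
Open Scope R_scope.

Inductive dir : Type := Dn | Up.
Inductive action : Type := AD | AU | AW.

Definition act_of (d : dir) : action := match d with Dn => AD | Up => AU end.

Definition dir_eqb (x y : dir) : bool :=
  match x, y with Dn, Dn | Up, Up => true | _, _ => false end.
Definition act_eqb (x y : action) : bool :=
  match x, y with AD, AD | AU, AU | AW, AW => true | _, _ => false end.

Fixpoint natsum (f : nat -> nat) (n : nat) : nat :=
  match n with O => O | S m => (natsum f m + f m)%nat end.

(* An instance: k streams, stream i < k has direction dr i, periodicity
   lam i >= 1 and offset 1 <= mu i <= lam i. *)
Definition valid_instance (k : nat) (lam mu : nat -> nat) : Prop :=
  forall i, (i < k)%nat -> (1 <= lam i)%nat /\ (1 <= mu i <= lam i)%nat.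

Definition arr (lam mu : nat -> nat) (i t : nat) : nat :=
  if Nat.eqb (t mod lam i) (mu i mod lam i) then 1%nat else 0%nat.

Definition arr_dir (k : nat) (dr : nat -> dir) (lam mu : nat -> nat)
    (d : dir) (t : nat) : nat :=
  natsum (fun i => if dir_eqb (dr i) d then arr lam mu i t else 0%nat) k.

(* A schedule is a map from periods to actions; only periods t >= 1 matter. *)
Definition schedule := nat -> action.

Definition feasible (s : schedule) : Prop :=
  forall t1 t2, (1 <= t1)%nat -> (t1 < t2)%nat ->
    s t1 <> AW -> s t2 <> AW ->
    (forall t, (t1 < t)%nat -> (t < t2)%nat -> s t = AW) ->
    s t1 <> s t2.

Fixpoint queue (k : nat) (dr : nat -> dir) (lam mu : nat -> nat)
    (s : schedule) (d : dir) (t : nat) : nat :=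
  match t with
  | O => O
  | S t' => if act_eqb (s (S t')) (act_of d) then O
            else (queue k dr lam mu s d t' + arr_dir k dr lam mu d (S t'))%nat
  end.

Definition cost (k : nat) (dr : nat -> dir) (lam mu : nat -> nat)
    (s : schedule) (t : nat) : nat :=
  (queue k dr lam mu s Dn t + queue k dr lam mu s Up t)%nat.

(* Running average (1/T) sum_{t=1}^T C_s(t), indexed by n with T = n+1. *)
Definition avg_cost (k : nat) (dr : nat -> dir) (lam mu : nat -> nat)
    (s : schedule) (n : nat) : R :=
  INR (natsum (fun t => cost k dr lam mu s (S t)) (S n)) / INR (S n).

(* C_avg,s = l : the limit of the running averages exists and equals l
   (l in the extended reals, so +oo is allowed). *)
Definition Cavg_is (k : nat) (dr : nat -> dir) (lam mu : nat -> nat)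
    (s : schedule) (l : Rbar) : Prop :=
  is_lim_seq (avg_cost k dr lam mu s) l.

Definition optimal (k : nat) (dr : nat -> dir) (lam mu : nat -> nat)
    (s : schedule) : Prop :=
  feasible s /\
  exists l, Cavg_is k dr lam mu s l /\
    forall s' l', feasible s' -> Cavg_is k dr lam mu s' l' -> Rbar_le l l'.

From Stdlib Require Import Reals Arith Lia Lra Classical FinFun.
From Coquelicot Require Import Coquelicot.

(* Call a schedule regular if it never waits in two consecutive periods.  Replacing
   consecutive waits by a switch and a switch back only serves vessels earlier, so every
   feasible schedule is dominated, queue by queue, by a regular one.  A regular schedule
   serves each direction in every four consecutive periods, so its queues stay below
   [3 k]; hence its state (time modulo the product of the periodicities, both queues,
   orientation, waiting or not) takes at most [num_states] values, and every window of
   [num_states] periods contains a cycle between two periods in the same state.  Let [c]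
   be the least average cost of such a cycle.  Cutting cycles out of a regular schedule
   shows that it costs at least [c (n - num_states - 1)] over [n] periods, so no feasible
   schedule averages below [c]; repeating a cycle of average cost [c] forever gives a
   regular schedule whose average cost is exactly [c]. *)

Set Bullet Behavior "Strict Subproofs".
Open Scope nat_scope.

Lemma natsum_le f g n : (forall i, i < n -> f i <= g i) -> natsum f n <= natsum g n.
Proof.
  induction n as [|n IH]; simpl; intros H; [lia|].
  specialize (IH (fun i Hi => H i ltac:(lia))). specialize (H n ltac:(lia)). lia.
Qed.

Lemma natsum_ext f g n : (forall i, i < n -> f i = g i) -> natsum f n = natsum g n.
Proof.
  intros H. apply Nat.le_antisymm; apply natsum_le; intros i Hi; rewrite H by exact Hi; lia.
Qed.

Lemma natsum_le_const f n c : (forall i, i < n -> f i <= c) -> natsum f n <= n * c.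
Proof.
  induction n as [|n IH]; simpl; intros H; [lia|].
  specialize (IH (fun i Hi => H i ltac:(lia))). specialize (H n ltac:(lia)). lia.
Qed.

Lemma natsum_add f n m : natsum f (n + m) = natsum f n + natsum (fun t => f (n + t)) m.
Proof.
  induction m as [|m IH]; simpl; [now rewrite !Nat.add_0_r|].
  rewrite Nat.add_succ_r. simpl. rewrite IH. lia.
Qed.

Lemma natsum_periodic_window f i D : (forall t, i <= t -> f (t + D) = f t) ->
  forall m, natsum (fun t => f (i + m + t)) D = natsum (fun t => f (i + t)) D.
Proof.
  intros Hper m. induction m as [|m IH]; [now rewrite Nat.add_0_r|].
  set (g := fun t => f (i + m + t)).
  assert (E : natsum g (1 + D) = natsum g (D + 1)) by (f_equal; lia).
  rewrite !natsum_add in E. simpl in E. unfold g in E at 1 4.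
  rewrite !Nat.add_0_r, Hper in E by lia.
  erewrite natsum_ext in E
    by (intros t _; unfold g; now replace (i + m + S t) with (i + S m + t) by lia).
  unfold g in E. lia.
Qed.

Lemma natsum_periodic_add f i D r q : (forall t, i <= t -> f (t + D) = f t) ->
  natsum f (i + r + q * D) = natsum f (i + r) + q * natsum (fun t => f (i + t)) D.
Proof.
  intros Hper. induction q as [|q IH]; [simpl; now rewrite !Nat.add_0_r|].
  replace (i + r + S q * D) with (i + r + q * D + D) by lia.
  rewrite natsum_add, IH.
  rewrite (natsum_ext (fun t => f (i + r + q * D + t)) (fun t => f (i + (r + q * D) + t)))
    by (intros t _; cbv beta; f_equal; lia).
  rewrite natsum_periodic_window by exact Hper. lia.
Qed.

Lemma natsum_periodic_bounds f i D b c : 0 < D ->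
  (forall t, i <= t -> f (t + D) = f t) -> (forall t, f t <= b) ->
  natsum (fun t => f (i + t)) D = c ->
  forall n, D * natsum f n <= n * c + (i + D) * (D * b + c) /\
            n * c <= D * natsum f n + (i + D) * (D * b + c).
Proof.
  intros HD Hper Hb Hc n.
  assert (Hsum : forall n, natsum f n <= n * b) by (intros m; apply natsum_le_const; auto).
  destruct (le_lt_dec i n) as [Hn|Hn].
  - pose proof (Nat.div_mod_eq (n - i) D).
    pose proof (Nat.mod_upper_bound (n - i) D ltac:(lia)).
    set (r := (n - i) mod D) in *. set (q := (n - i) / D) in *.
    replace n with (i + r + q * D) by lia. rewrite natsum_periodic_add by exact Hper.
    rewrite Hc. pose proof (Hsum (i + r)). nia.
  - pose proof (Hsum n). nia.
Qed.

Fixpoint natprod (f : nat -> nat) (n : nat) : nat :=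
  match n with O => 1 | S m => natprod f m * f m end.

Lemma natprod_pos f n : (forall i, i < n -> 1 <= f i) -> 1 <= natprod f n.
Proof.
  induction n as [|n IH]; simpl; intros H; [lia|].
  specialize (IH (fun i Hi => H i ltac:(lia))). specialize (H n ltac:(lia)). nia.
Qed.

Lemma natprod_divide f n i : i < n -> Nat.divide (f i) (natprod f n).
Proof.
  induction n as [|n IH]; simpl; intros Hi; [lia|].
  destruct (Nat.eq_dec i n) as [->|Hne].
  - apply Nat.divide_factor_r.
  - apply Nat.divide_mul_l, IH. lia.
Qed.

Lemma divide_fact n m : 1 <= n <= m -> Nat.divide n (fact m).
Proof.
  induction m as [|m IH]; intros Hn; [lia|]. change (fact (S m)) with (S m * fact m).
  destruct (Nat.eq_dec n (S m)) as [->|Hne].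
  - apply Nat.divide_factor_l.
  - apply Nat.divide_mul_r, IH. lia.
Qed.

Lemma divide_sub_of_mod_eq x y L : 1 <= L -> x mod L = y mod L -> x <= y ->
  Nat.divide L (y - x).
Proof.
  intros HL Hm Hxy. pose proof (Nat.div_mod_eq x L). pose proof (Nat.div_mod_eq y L).
  assert (x / L <= y / L) by (apply Nat.Div0.div_le_mono; exact Hxy).
  exists (y / L - x / L). rewrite Nat.mul_sub_distr_r. nia.
Qed.

Lemma pigeonhole n (f : nat -> nat) : (forall i, i <= n -> f i < n) ->
  exists i j, i < j <= n /\ f i = f j.
Proof.
  intros Hf.
  assert (Hninj : ~ bInjective (S n) f).
  { intros Hinj. apply bInjective_bSurjective in Hinj; [|intros x Hx; specialize (Hf x); lia].
    destruct (Hinj n ltac:(lia)) as [x [Hx Hfx]]. specialize (Hf x). lia. }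
  apply NNPP. intros Hnone. apply Hninj. intros x y Hx Hy Hxy.
  destruct (lt_eq_lt_dec x y) as [[Hlt | Heq] | Hlt]; [| exact Heq |]; exfalso; apply Hnone.
  - exists x, y. split; [lia | exact Hxy].
  - exists y, x. split; [lia | now symmetry].
Qed.

Definition wrap (i D t : nat) : nat := if t <=? i then t else i + S ((t - S i) mod D).

Lemma wrap_id i D t : t <= i + D -> wrap i D t = t.
Proof.
  intros Ht. unfold wrap. destruct (Nat.leb_spec t i); [reflexivity|].
  rewrite Nat.mod_small; lia.
Qed.

Lemma wrap_add_period i D t : i < t -> wrap i D (t + D) = wrap i D t.
Proof.
  intros Ht. unfold wrap. destruct (Nat.leb_spec (t + D) i), (Nat.leb_spec t i); try lia.
  replace (t + D - S i) with (t - S i + 1 * D) by lia. now rewrite Nat.Div0.mod_add.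
Qed.

Lemma wrap_shift i D t : exists q, t = wrap i D t + q * D.
Proof.
  unfold wrap. destruct (Nat.leb_spec t i); [exists 0; lia|].
  exists ((t - S i) / D). pose proof (Nat.div_mod_eq (t - S i) D). lia.
Qed.

Lemma wrap_succ i D t : 0 < D ->
  wrap i D (S t) = S (wrap i D t) \/ (wrap i D t = i + D /\ wrap i D (S t) = S i).
Proof.
  intros HD. unfold wrap. destruct (Nat.leb_spec (S t) i), (Nat.leb_spec t i); try lia.
  - left. replace (S t - S i) with 0 by lia. rewrite Nat.Div0.mod_0_l. lia.
  - pose proof (Nat.mod_upper_bound (t - S i) D ltac:(lia)).
    replace (S t - S i) with (t - S i + 1) by lia.
    rewrite <- Nat.Div0.add_mod_idemp_l. set (r := (t - S i) mod D) in *.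
    destruct (Nat.eq_dec (S r) D) as [Er|Er].
    + right. replace (r + 1) with D by lia. rewrite Nat.Div0.mod_same. lia.
    + left. rewrite Nat.mod_small; lia.
Qed.

Lemma mixed_radix_lt a b L N : a < L -> b < N -> a + L * b < L * N.
Proof. intros. nia. Qed.

Lemma mixed_radix_inj a b c d L : a < L -> c < L -> a + L * b = c + L * d -> a = c /\ b = d.
Proof. intros. assert (b = d) by nia. subst. lia. Qed.

Definition opp (d : dir) : dir := match d with Dn => Up | Up => Dn end.

Lemma opp_involutive d : opp (opp d) = d.
Proof. now destruct d. Qed.

Lemma act_of_inj d e : act_of d = act_of e -> d = e.
Proof. destruct d, e; simpl; congruence. Qed.

Lemma act_of_neq_AW d : act_of d <> AW.
Proof. now destruct d. Qed.

Lemma action_neq_AW a : a <> AW -> exists d, a = act_of d.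
Proof. destruct a; intros H; [exists Dn | exists Up | congruence]; reflexivity. Qed.

Lemma act_eqb_act_of a d : act_eqb a (act_of d) = true <-> a = act_of d.
Proof. destruct a, d; simpl; split; intros; congruence. Qed.

(* [o t] is the direction of the latest action up to period [t]. *)
Record regular (s : schedule) (o : nat -> dir) : Prop := {
  regular_act : forall t d, s (S t) = act_of d -> o t = opp d /\ o (S t) = d;
  regular_wait : forall t, s (S t) = AW -> o (S t) = o t;
  regular_no_double_wait : forall t, 1 <= t -> ~ (s t = AW /\ s (S t) = AW) }.

Lemma regular_dir_const s o t m : regular s o ->
  (forall u, t < u <= t + m -> s u = AW) -> o (t + m) = o t.
Proof.
  intros Hs Hw. induction m as [|m IH]; [now rewrite Nat.add_0_r|].
  rewrite Nat.add_succ_r, (regular_wait _ _ Hs), IH; [reflexivity | |];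
    intros; apply Hw; lia.
Qed.

Lemma regular_feasible s o : regular s o -> feasible s.
Proof.
  intros Hs t1 t2 Ht1 Ht12 Hs1 Hs2 Hw.
  destruct (action_neq_AW _ Hs1) as [d1 E1], (action_neq_AW _ Hs2) as [d2 E2].
  destruct t1 as [|t1]; [lia|]. destruct t2 as [|t2]; [lia|].
  pose proof (proj2 (regular_act _ _ Hs _ _ E1)) as O1.
  pose proof (proj1 (regular_act _ _ Hs _ _ E2)) as O2.
  assert (Hconst : o t2 = o (S t1)).
  { replace t2 with (S t1 + (t2 - S t1)) by lia.
    apply (regular_dir_const s); [exact Hs|]. intros u Hu. apply Hw; lia. }
  rewrite E1, E2. intros E. apply act_of_inj in E. subst d2.
  rewrite O1, O2 in Hconst. destruct d1; discriminate.
Qed.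

Lemma regular_next_action s o p e : regular s o -> 1 <= p -> s p = act_of e ->
  exists q, p < q <= p + 2 /\ s q = act_of (opp e).
Proof.
  intros Hs Hp Hpe. destruct p as [|p]; [lia|].
  pose proof (proj2 (regular_act _ _ Hs _ _ Hpe)) as Oe.
  destruct (classic (s (S (S p)) = AW)) as [Hw|Hw].
  - assert (Hw' : s (S (S (S p))) <> AW)
      by (intros Hw'; exact (regular_no_double_wait _ _ Hs (S (S p)) ltac:(lia) (conj Hw Hw'))).
    destruct (action_neq_AW _ Hw') as [d Hd]. exists (S (S (S p))). split; [lia|].
    rewrite Hd. destruct (regular_act _ _ Hs _ _ Hd) as [Od _].
    rewrite (regular_wait _ _ Hs _ Hw), Oe in Od. now rewrite Od, opp_involutive.
  - destruct (action_neq_AW _ Hw) as [d Hd]. exists (S (S p)). split; [lia|].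
    rewrite Hd. destruct (regular_act _ _ Hs _ _ Hd) as [Od _].
    rewrite Oe in Od. now rewrite Od, opp_involutive.
Qed.

Lemma regular_serves_within_4 s o d t : regular s o -> 4 <= t ->
  exists tau, t - 3 <= tau <= t /\ s tau = act_of d.
Proof.
  intros Hs Ht.
  assert (Hp : exists p, t - 3 <= p <= t - 2 /\ s p <> AW).
  { destruct (classic (s (t - 3) = AW)) as [Hw|Hw]; [|exists (t - 3); split; [lia | exact Hw]].
    exists (S (t - 3)). split; [lia|]. intros Hw'.
    exact (regular_no_double_wait _ _ Hs (t - 3) ltac:(lia) (conj Hw Hw')). }
  destruct Hp as [p [Hp Hsp]]. destruct (action_neq_AW _ Hsp) as [e He].
  assert (Hde : d = e \/ d = opp e) by (destruct d, e; auto).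
  destruct Hde as [-> | ->].
  - exists p. split; [lia | exact He].
  - destruct (regular_next_action s o p e Hs ltac:(lia) He) as [q [Hq Hsq]].
    exists q. split; [lia | exact Hsq].
Qed.

Fixpoint last_dir (s : schedule) (o0 : dir) (t : nat) : dir :=
  match t with
  | O => o0
  | S t' => match s (S t') with AD => Dn | AU => Up | AW => last_dir s o0 t' end
  end.

Lemma last_dir_wait s o0 t : s (S t) = AW -> last_dir s o0 (S t) = last_dir s o0 t.
Proof. intros H. simpl. now rewrite H. Qed.

Lemma last_dir_act s o0 t d : s (S t) = act_of d -> last_dir s o0 (S t) = d.
Proof. intros H. simpl. rewrite H. now destruct d. Qed.

Lemma last_dir_spec s o0 t :
  ((forall u, 1 <= u <= t -> s u = AW) /\ last_dir s o0 t = o0) \/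
  (exists p e, 1 <= p <= t /\ s p = act_of e /\
     (forall u, p < u <= t -> s u = AW) /\ last_dir s o0 t = e).
Proof.
  induction t as [|t IH]; [left; split; [intros; lia | reflexivity]|].
  destruct (s (S t)) eqn:E.
  - right. exists (S t), Dn. repeat split; try (intros; lia); [exact E | now apply last_dir_act].
  - right. exists (S t), Up. repeat split; try (intros; lia); [exact E | now apply last_dir_act].
  - rewrite last_dir_wait by exact E.
    destruct IH as [[Hw Ho] | [p [e [Hp [He [Hw Ho]]]]]].
    + left. split; [|exact Ho]. intros u Hu.
      destruct (Nat.eq_dec u (S t)) as [->|]; [exact E | apply Hw; lia].
    + right. exists p, e. repeat split; [lia | lia | exact He | | exact Ho]. intros u Hu.
      destruct (Nat.eq_dec u (S t)) as [->|]; [exact E | apply Hw; lia].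
Qed.

Definition consistent_start (s : schedule) (o0 : dir) : Prop :=
  forall t d, s (S t) = act_of d -> (forall u, 1 <= u <= t -> s u = AW) -> o0 = opp d.

Lemma consistent_start_exists s : exists o0, consistent_start s o0.
Proof.
  destruct (classic (exists t d, s (S t) = act_of d /\ forall u, 1 <= u <= t -> s u = AW))
    as [[t [d [Hd Hw]]] | Hnone].
  - exists (opp d). intros t' d' Hd' Hw'. f_equal.
    assert (t' = t).
    { destruct (lt_eq_lt_dec t' t) as [[Hlt | Heq] | Hlt]; [| exact Heq |].
      - exfalso. apply (act_of_neq_AW d'). rewrite <- Hd'. apply Hw. lia.
      - exfalso. apply (act_of_neq_AW d). rewrite <- Hd. apply Hw'. lia. }
    subst t'. apply act_of_inj. congruence.
  - exists Dn. intros t d Hd Hw. exfalso. apply Hnone. now exists t, d.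
Qed.

Lemma last_dir_before_act s o0 t d : feasible s -> consistent_start s o0 ->
  s (S t) = act_of d -> last_dir s o0 t = opp d.
Proof.
  intros Hf Ho0 Hd.
  destruct (last_dir_spec s o0 t) as [[Hw ->] | [p [e [Hp [He [Hw ->]]]]]].
  - exact (Ho0 t d Hd Hw).
  - assert (Hne : s p <> s (S t)).
    { apply Hf; [lia | lia | rewrite He; apply act_of_neq_AW
        | rewrite Hd; apply act_of_neq_AW |].
      intros u Hu1 Hu2. apply Hw. lia. }
    rewrite He, Hd in Hne. destruct e, d; simpl in *; congruence.
Qed.

(* Each pair of consecutive waits of [s] becomes a switch followed by a switch back;
   the flag marks the first switch of such a pair. *)
Fixpoint break_waits (s : schedule) (o : nat -> dir) (t : nat) : action * bool :=
  match t with
  | O => (AW, false)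
  | S t' =>
      match s (S t') with
      | AW =>
          if snd (break_waits s o t') then (act_of (o t'), false)
          else match s (S (S t')) with
               | AW => (act_of (opp (o t')), true)
               | _ => (AW, false)
               end
      | a => (a, false)
      end
  end.

Lemma break_waits_cases s o t :
  (s (S t) <> AW /\ snd (break_waits s o t) = false /\
     break_waits s o (S t) = (s (S t), false)) \/
  (s (S t) = AW /\ snd (break_waits s o t) = true /\
     break_waits s o (S t) = (act_of (o t), false)) \/
  (s (S t) = AW /\ snd (break_waits s o t) = false /\
     break_waits s o (S t) = (act_of (opp (o t)), true)) \/
  (s (S t) = AW /\ snd (break_waits s o t) = false /\ s (S (S t)) <> AW /\
     break_waits s o (S t) = (AW, false)).
Proof.
  assert (Hflag : snd (break_waits s o t) = true -> s (S t) = AW).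
  { destruct t as [|t]; simpl; [discriminate|].
    destruct (s (S t)); try discriminate.
    destruct (snd (break_waits s o t)); try discriminate.
    destruct (s (S (S t))); now try discriminate. }
  simpl. destruct (s (S t)) eqn:E.
  - left. destruct (snd (break_waits s o t)); [now specialize (Hflag eq_refl) | easy].
  - left. destruct (snd (break_waits s o t)); [now specialize (Hflag eq_refl) | easy].
  - right. destruct (snd (break_waits s o t)); [now left|].
    right. destruct (s (S (S t))) eqn:E2; [right | right | left]; repeat split; congruence.
Qed.

Lemma break_waits_keeps_act s o t d :
  s (S t) = act_of d -> fst (break_waits s o (S t)) = act_of d.
Proof. intros H. simpl. rewrite H. now destruct d. Qed.

Lemma break_waits_regular s o0 : feasible s -> consistent_start s o0 ->
  regular (fun t => fst (break_waits s (last_dir s o0) t))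
          (fun t => if snd (break_waits s (last_dir s o0) t)
                    then opp (last_dir s o0 t) else last_dir s o0 t).
Proof.
  intros Hf Ho0. set (o := last_dir s o0).
  split.
  - intros t d Hd.
    destruct (break_waits_cases s o t)
      as [[_ [F E]] | [[Hw [F E]] | [[Hw [F E]] | [_ [F [_ E]]]]]];
      rewrite E in *; rewrite F; simpl in *.
    + split; [now apply last_dir_before_act | now apply last_dir_act].
    + apply act_of_inj in Hd. subst d. split; [reflexivity|]. now apply last_dir_wait.
    + apply act_of_inj in Hd. subst d. rewrite opp_involutive.
      split; [reflexivity|]. f_equal. now apply last_dir_wait.
    + now destruct (act_of_neq_AW d).
  - intros t Hd.
    destruct (break_waits_cases s o t)
      as [[_ [F E]] | [[_ [F E]] | [[_ [F E]] | [Hw [F [_ E]]]]]];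
      rewrite E in *; rewrite F; simpl in *;
      solve [now destruct (act_of_neq_AW _ Hd) | now apply last_dir_wait].
  - (* Only the fourth case leaves a wait, and then [s] acts in the next period. *)
    intros t Ht [Ha Hb]. destruct t as [|t]; [lia|].
    destruct (break_waits_cases s o t)
      as [[Hw [_ E]] | [[_ [_ E]] | [[_ [_ E]] | [_ [_ [Hw' _]]]]]];
      try (rewrite E in Ha; simpl in Ha;
           solve [congruence | now destruct (act_of_neq_AW _ Ha)]).
    destruct (break_waits_cases s o (S t))
      as [[_ [_ E]] | [[Hw _] | [[Hw _] | [Hw _]]]]; [|congruence..].
    rewrite E in Hb. simpl in Hb. congruence.

Qed.

Definition alternating : schedule := fun t => if Nat.even t then AU else AD.

Lemma alternating_regular : regular alternating (fun t => if Nat.even t then Up else Dn).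
Proof.
  unfold alternating. split.
  - intros t d. rewrite Nat.even_succ, <- Nat.negb_even.
    destruct (Nat.even t), d; simpl; intros H; easy.
  - intros t. destruct (Nat.even (S t)); discriminate.
  - intros t _ [H _]. destruct (Nat.even t); discriminate.
Qed.

Section Instance.

Variables (k : nat) (dr : nat -> dir) (lam mu : nat -> nat).

Local Notation arrivals := (arr_dir k dr lam mu).
Local Notation qlen := (queue k dr lam mu).
Local Notation pcost := (cost k dr lam mu).

Lemma arrivals_le d t : arrivals d t <= k.
Proof.
  unfold arr_dir. transitivity (k * 1); [|lia]. apply natsum_le_const.
  intros i _. unfold arr. destruct (dir_eqb _ _); [|lia]. destruct (Nat.eqb _ _); lia.
Qed.

Lemma qlen_succ s d t : qlen s d (S t) =
  if act_eqb (s (S t)) (act_of d) then 0 else qlen s d t + arrivals d (S t).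
Proof. reflexivity. Qed.

Lemma qlen_served s d t : s (S t) = act_of d -> qlen s d (S t) = 0.
Proof. intros H. rewrite qlen_succ, H. now destruct d. Qed.

Lemma qlen_add_le s d t m : qlen s d (t + m) <= qlen s d t + m * k.
Proof.
  induction m as [|m IH]; [rewrite Nat.add_0_r; lia|].
  rewrite Nat.add_succ_r, qlen_succ. pose proof (arrivals_le d (S (t + m))).
  destruct (act_eqb _ _); lia.
Qed.

Lemma qlen_regular_le s o d t : regular s o -> qlen s d t <= 3 * k.
Proof.
  intros Hs.
  assert (Hserved : exists tau, tau <= t <= tau + 3 /\ qlen s d tau = 0).
  { destruct (le_lt_dec 4 t) as [Ht|Ht]; [|exists 0; split; [lia | reflexivity]].
    destruct (regular_serves_within_4 s o d t Hs Ht) as [[|tau] [Htau E]]; [lia|].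
    exists (S tau). split; [lia|]. now apply qlen_served. }
  destruct Hserved as [tau [Ht Hq]].
  replace t with (tau + (t - tau)) by lia.
  pose proof (qlen_add_le s d tau (t - tau)). nia.
Qed.

Lemma cost_regular_le s o t : regular s o -> pcost s t <= 6 * k.
Proof.
  intros Hs. unfold cost.
  pose proof (qlen_regular_le s o Dn t Hs). pose proof (qlen_regular_le s o Up t Hs). lia.
Qed.

Lemma qlen_le_of_serves s s' : (forall t d, s (S t) = act_of d -> s' (S t) = act_of d) ->
  forall d t, qlen s' d t <= qlen s d t.
Proof.
  intros Hserve d t. induction t as [|t IH]; [reflexivity|].
  rewrite !qlen_succ. destruct (act_eqb (s' (S t)) (act_of d)) eqn:E'; [lia|].
  destruct (act_eqb (s (S t)) (act_of d)) eqn:E; [|lia].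
  apply act_eqb_act_of, Hserve in E. apply act_eqb_act_of in E. congruence.
Qed.

Lemma feasible_dominated s : feasible s ->
  exists s' o', regular s' o' /\ forall d t, qlen s' d t <= qlen s d t.
Proof.
  intros Hf. destruct (consistent_start_exists s) as [o0 Ho0].
  eexists; eexists. split; [exact (break_waits_regular s o0 Hf Ho0)|].
  apply qlen_le_of_serves. intros t d Hd. now apply break_waits_keeps_act.
Qed.

Local Notation hyperperiod := (natprod lam k).

Lemma arrivals_periodic d t p : Nat.divide hyperperiod p -> arrivals d (t + p) = arrivals d t.
Proof.
  intros [m ->]. unfold arr_dir. apply natsum_ext. intros i Hi.
  destruct (dir_eqb (dr i) d); [|reflexivity]. unfold arr.
  destruct (natprod_divide lam k i Hi) as [r ->].
  now rewrite Nat.mul_assoc, Nat.Div0.mod_add.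
Qed.

Definition same_state (s : schedule) (o : nat -> dir) (x y : nat) : Prop :=
  (forall d, qlen s d x = qlen s d y) /\ o x = o y /\ (s x = AW <-> s y = AW).

Lemma same_state_sym s o x y : same_state s o x y -> same_state s o y x.
Proof. intros [Hq [Ho Hw]]. split; [|split]; [intros d; now rewrite Hq | easy | tauto]. Qed.

Section Reindex.

Variables (s : schedule) (o : nat -> dir) (rho : nat -> nat).
Hypothesis s_regular : regular s o.
Hypothesis rho_step : forall t, exists y, rho (S t) = S y /\
  (y = rho t \/ (1 <= y /\ same_state s o (rho t) y)).

Lemma regular_reindex : regular (fun t => s (rho t)) (fun t => o (rho t)).
Proof.
  split.
  - intros t d Hd. destruct (rho_step t) as [y [Hy Hjump]]. rewrite Hy in Hd |- *.
    destruct (regular_act _ _ s_regular y d Hd) as [Oy OSy]. split; [|exact OSy].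
    destruct Hjump as [-> | [_ [_ [Eo _]]]]; congruence.
  - intros t Hw. destruct (rho_step t) as [y [Hy Hjump]]. rewrite Hy in Hw |- *.
    rewrite (regular_wait _ _ s_regular y Hw).
    destruct Hjump as [-> | [_ [_ [Eo _]]]]; congruence.
  - intros t Ht [Hw1 Hw2]. destruct t as [|t]; [lia|].
    destruct (rho_step (S t)) as [y [Hy Hjump]]. rewrite Hy in Hw2.
    destruct Hjump as [Ey | [Hy1 [_ [_ Ew]]]].
    + destruct (rho_step t) as [y' [Hy' _]]. rewrite Ey in Hw2. rewrite Hy' in Hw1, Hw2.
      exact (regular_no_double_wait _ _ s_regular (S y') ltac:(lia) (conj Hw1 Hw2)).
    + exact (regular_no_double_wait _ _ s_regular y Hy1 (conj (proj1 Ew Hw1) Hw2)).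
Qed.

Lemma qlen_reindex : rho 0 = 0 -> (forall d t, arrivals d (rho t) = arrivals d t) ->
  forall d t, qlen (fun t => s (rho t)) d t = qlen s d (rho t).
Proof.
  intros rho_0 rho_arrivals d t. induction t as [|t IH]; [now rewrite rho_0|].
  destruct (rho_step t) as [y [Hy Hjump]].
  rewrite qlen_succ, Hy, qlen_succ, <- Hy, rho_arrivals, IH.
  destruct Hjump as [-> | [_ [Eq _]]]; [reflexivity|]. now rewrite Eq.
Qed.

Lemma cost_reindex : rho 0 = 0 -> (forall d t, arrivals d (rho t) = arrivals d t) ->
  forall t, pcost (fun t => s (rho t)) t = pcost s (rho t).
Proof. intros rho_0 rho_arrivals t. unfold cost. now rewrite !qlen_reindex. Qed.

End Reindex.

Hypothesis lam_pos : forall i, i < k -> 1 <= lam i.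

Lemma hyperperiod_pos : 1 <= hyperperiod.
Proof. exact (natprod_pos lam k lam_pos). Qed.

Definition dir_index (d : dir) : nat := match d with Dn => 0 | Up => 1 end.
Definition wait_index (a : action) : nat := match a with AW => 1 | _ => 0 end.

Local Notation qbound := (3 * k + 1).

Definition num_states : nat := hyperperiod * (qbound * (qbound * 4)).

Definition state_code (s : schedule) (o : nat -> dir) (t : nat) : nat :=
  t mod hyperperiod + hyperperiod * (qlen s Dn t + qbound * (qlen s Up t +
    qbound * (dir_index (o t) + 2 * wait_index (s t)))).

Lemma state_code_lt s o t : regular s o -> state_code s o t < num_states.
Proof.
  intros Hs. pose proof hyperperiod_pos.
  pose proof (qlen_regular_le s o Dn t Hs). pose proof (qlen_regular_le s o Up t Hs).
  unfold state_code, num_states.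
  apply mixed_radix_lt; [apply Nat.mod_upper_bound; lia|].
  apply mixed_radix_lt; [lia|]. apply mixed_radix_lt; [lia|].
  destruct (o t), (s t); simpl; lia.
Qed.

Lemma state_code_inj s o x y : regular s o -> state_code s o x = state_code s o y ->
  x mod hyperperiod = y mod hyperperiod /\ same_state s o x y.
Proof.
  intros Hs Hc. pose proof hyperperiod_pos.
  assert (Hq : forall t d, qlen s d t < qbound)
    by (intros t d; pose proof (qlen_regular_le s o d t Hs); lia).
  unfold state_code in Hc.
  apply mixed_radix_inj in Hc as [Hmod Hc]; try (apply Nat.mod_upper_bound; lia).
  apply mixed_radix_inj in Hc as [HqD Hc]; try apply Hq.
  apply mixed_radix_inj in Hc as [HqU Hc]; try apply Hq.
  split; [exact Hmod|]. split; [intros []; assumption|].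
  destruct (o x), (o y), (s x), (s y); simpl in Hc; try lia;
    (split; [reflexivity | split; intros; congruence]).
Qed.

Definition cost_sum (s : schedule) (a n : nat) : nat := natsum (fun t => pcost s (a + S t)) n.

Lemma cost_sum_add s a n m : cost_sum s a (n + m) = cost_sum s a n + cost_sum s (a + n) m.
Proof.
  unfold cost_sum. rewrite natsum_add. f_equal.
  apply natsum_ext. intros t _. cbv beta. f_equal. lia.
Qed.

Lemma cost_sum_ext s s' a a' n :
  (forall t, t < n -> pcost s (a + S t) = pcost s' (a' + S t)) ->
  cost_sum s a n = cost_sum s' a' n.
Proof. intros H. unfold cost_sum. now apply natsum_ext. Qed.

Definition cycle (s : schedule) (o : nat -> dir) (i j : nat) : Prop :=
  regular s o /\ 1 <= i < j /\ j <= i + num_states /\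
  i mod hyperperiod = j mod hyperperiod /\ same_state s o i j.

Lemma cycle_length_divisible s o i j : cycle s o i j -> Nat.divide hyperperiod (j - i).
Proof.
  intros [_ [Hij [_ [Hmod _]]]].
  apply divide_sub_of_mod_eq; [exact hyperperiod_pos | exact Hmod | lia].
Qed.

Lemma regular_cycle_within s o a : regular s o -> 1 <= a ->
  exists i j, a <= i /\ j <= a + num_states /\ cycle s o i j.
Proof.
  intros Hs Ha.
  destruct (pigeonhole num_states (fun x => state_code s o (a + x))) as [x [y [Hxy Hc]]].
  { intros x _. now apply state_code_lt. }
  apply state_code_inj in Hc as [Hmod Hsame]; [|exact Hs].
  exists (a + x), (a + y). split; [lia|]. split; [lia|].
  split; [exact Hs|]. split; [lia|]. split; [lia|]. split; assumption.
Qed.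

(* [v / fact num_states] is the average cost of the cycle; the factorial is a multiple
   of every cycle length, so [v] is a natural number. *)
Definition cycle_value (v : nat) : Prop :=
  exists s o i j, cycle s o i j /\ v * (j - i) = fact num_states * cost_sum s i (j - i).

Lemma cycle_has_value s o i j : cycle s o i j ->
  exists v, cycle_value v /\ v * (j - i) = fact num_states * cost_sum s i (j - i).
Proof.
  intros Hc. pose proof Hc as [_ [Hij [Hj _]]].
  destruct (divide_fact (j - i) num_states ltac:(lia)) as [q Hq].
  exists (q * cost_sum s i (j - i)).
  assert (Hv : q * cost_sum s i (j - i) * (j - i) = fact num_states * cost_sum s i (j - i))
    by (rewrite Hq; ring).
  split; [exists s, o, i, j; split; assumption | exact Hv].
Qed.

Lemma min_cycle_value : exists v0, cycle_value v0 /\ forall v, cycle_value v -> v0 <= v.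
Proof.
  destruct (regular_cycle_within _ _ 1 alternating_regular (le_n 1)) as [i [j [_ [_ Hc]]]].
  destruct (cycle_has_value _ _ i j Hc) as [v [Hv _]].
  destruct (dec_inh_nat_subset_has_unique_least_element cycle_value (fun n => classic _))
    as [v0 [[Hv0 Hmin] _]]; [now exists v|].
  now exists v0.
Qed.

Lemma excise_cycle s o i j a n : cycle s o i j -> a <= i -> j <= a + n ->
  exists s' o', regular s' o' /\
    cost_sum s a n = cost_sum s' a (n - (j - i)) + cost_sum s i (j - i).
Proof.
  intros Hc Ha Hn. pose proof (cycle_length_divisible s o i j Hc) as HD.
  destruct Hc as [Hs [Hij [_ [_ Hsame]]]].
  set (D := j - i) in *.
  set (rho := fun t => if t <=? i then t else t + D).
  assert (Hrho_arr : forall d t, arrivals d (rho t) = arrivals d t).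
  { intros d t. unfold rho. destruct (t <=? i); [reflexivity|]. now apply arrivals_periodic. }
  assert (Hrho_step : forall t, exists y, rho (S t) = S y /\
                        (y = rho t \/ (1 <= y /\ same_state s o (rho t) y))).
  { intros t. unfold rho. destruct (Nat.leb_spec (S t) i), (Nat.leb_spec t i).
    - exists t. split; [reflexivity | now left].
    - lia.
    - exists j. split; [unfold D; lia|]. right. replace t with i by lia. split; [lia | exact Hsame].
    - exists (t + D). split; [lia | now left]. }
  exists (fun t => s (rho t)), (fun t => o (rho t)).
  split; [exact (regular_reindex s o rho Hs Hrho_step)|].
  assert (Hcost : forall t, pcost (fun t => s (rho t)) t = pcost s (rho t))
    by exact (cost_reindex s o rho Hrho_step eq_refl Hrho_arr).
  assert (Hbefore : cost_sum (fun t => s (rho t)) a (i - a) = cost_sum s a (i - a)).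
  { apply cost_sum_ext. intros t Ht. rewrite Hcost. unfold rho.
    destruct (Nat.leb_spec (a + S t) i); [reflexivity | lia]. }
  assert (Hafter : cost_sum (fun t => s (rho t)) i (n - (j - a)) = cost_sum s j (n - (j - a))).
  { apply cost_sum_ext. intros t _. rewrite Hcost. unfold rho.
    destruct (Nat.leb_spec (i + S t) i); [lia|]. f_equal. unfold D. lia. }
  replace n with (i - a + D + (n - (j - a))) at 1 by (unfold D; lia).
  replace (n - D) with (i - a + (n - (j - a))) by (unfold D; lia).
  rewrite !cost_sum_add. replace (a + (i - a)) with i by lia.
  replace (a + (i - a + D)) with j by (unfold D; lia). lia.
Qed.

Lemma cost_sum_lower_bound v0 : (forall v, cycle_value v -> v0 <= v) ->
  forall n s o a, regular s o ->
  v0 * (n - S num_states) <= fact num_states * cost_sum s a n.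
Proof.
  intros Hmin n. induction n as [n IH] using lt_wf_ind. intros s o a Hs.
  destruct (le_lt_dec n (S num_states)) as [Hn|Hn].
  { replace (n - S num_states) with 0 by lia. lia. }
  destruct (regular_cycle_within s o (S a) Hs ltac:(lia)) as [i [j [Hi [Hj Hc]]]].
  pose proof Hc as [_ [Hij _]].
  destruct (cycle_has_value s o i j Hc) as [v [Hv Hval]].
  destruct (excise_cycle s o i j a n Hc ltac:(lia) ltac:(lia)) as [s' [o' [Hs' ->]]].
  specialize (IH (n - (j - i)) ltac:(lia) s' o' a Hs').
  specialize (Hmin v Hv).
  assert (Hsplit : n - S num_states <= n - (j - i) - S num_states + (j - i)) by lia.
  apply (Nat.mul_le_mono_l _ _ v0) in Hsplit.
  assert (v0 * (j - i) <= v * (j - i)) by nia.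
  lia.
Qed.

Lemma feasible_cost_lower_bound v0 : (forall v, cycle_value v -> v0 <= v) ->
  forall s n, feasible s -> v0 * n <= fact num_states * cost_sum s 0 n + v0 * S num_states.
Proof.
  intros Hmin s n Hf. destruct (feasible_dominated s Hf) as [s' [o' [Hs' Hle]]].
  pose proof (cost_sum_lower_bound v0 Hmin n s' o' 0 Hs').
  assert (cost_sum s' 0 n <= cost_sum s 0 n).
  { apply natsum_le. intros t _. unfold cost.
    pose proof (Hle Dn (0 + S t)). pose proof (Hle Up (0 + S t)). lia. }
  assert (v0 * n <= v0 * (n - S num_states) + v0 * S num_states) by nia.
  nia.
Qed.

Lemma repeat_cycle s o i j : cycle s o i j -> exists s' o' K, regular s' o' /\ forall n,
  (j - i) * cost_sum s' 0 n <= n * cost_sum s i (j - i) + K /\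
  n * cost_sum s i (j - i) <= (j - i) * cost_sum s' 0 n + K.
Proof.
  intros Hc. pose proof (cycle_length_divisible s o i j Hc) as HD.
  destruct Hc as [Hs [Hij [_ [_ Hsame]]]].
  set (D := j - i) in *.
  assert (Hrho_arr : forall d t, arrivals d (wrap i D t) = arrivals d t).
  { intros d t. destruct (wrap_shift i D t) as [q Hq]. rewrite Hq at 2.
    now rewrite arrivals_periodic by (apply Nat.divide_mul_r; exact HD). }
  assert (Hrho_step : forall t, exists y, wrap i D (S t) = S y /\
            (y = wrap i D t \/ (1 <= y /\ same_state s o (wrap i D t) y))).
  { intros t. destruct (wrap_succ i D t ltac:(lia)) as [E | [E1 E2]].
    - exists (wrap i D t). split; [exact E | now left].
    - exists i. split; [exact E2|]. right. split; [lia|].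
      rewrite E1. replace (i + D) with j by lia. now apply same_state_sym. }
  set (s' := fun t => s (wrap i D t)). set (o' := fun t => o (wrap i D t)).
  assert (Hs' : regular s' o') by exact (regular_reindex s o _ Hs Hrho_step).
  assert (Hcost : forall t, pcost s' t = pcost s (wrap i D t))
    by exact (cost_reindex s o _ Hrho_step eq_refl Hrho_arr).
  exists s', o', ((i + D) * (D * (6 * k) + cost_sum s i D)). split; [exact Hs'|].
  apply (natsum_periodic_bounds (fun t => pcost s' (S t)) i D (6 * k)); [lia | | |].
  - intros t Ht. rewrite !Hcost. change (S (t + D)) with (S t + D).
    now rewrite wrap_add_period by lia.
  - intros t. exact (cost_regular_le s' o' (S t) Hs').
  - apply natsum_ext. intros t Ht. cbv beta. rewrite Hcost, wrap_id by lia. f_equal. lia.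
Qed.

End Instance.

Open Scope R_scope.

Lemma is_lim_seq_div_succ c : is_lim_seq (fun n => c / INR (S n)) 0.
Proof.
  assert (Hinv : is_lim_seq (fun n => / INR (S n)) 0).
  { apply (is_lim_seq_inv _ p_infty); [|discriminate].
    apply (is_lim_seq_incr_1 INR), is_lim_seq_INR. }
  apply (is_lim_seq_scal_l _ c) in Hinv. simpl in Hinv. rewrite Rmult_0_r in Hinv.
  exact Hinv.
Qed.

Lemma div_le_of_mul_le (A c K D N : R) : 0 < D -> 0 < N ->
  D * A <= N * c + K -> A / N <= c / D + K / D / N.
Proof.
  intros HD HN H. apply (Rmult_le_reg_r (D * N)); [now apply Rmult_lt_0_compat|].
  replace (A / N * (D * N)) with (D * A) by (field; lra).
  replace ((c / D + K / D / N) * (D * N)) with (N * c + K) by (field; lra). exact H.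
Qed.

Lemma div_ge_of_mul_ge (A c K D N : R) : 0 < D -> 0 < N ->
  N * c <= D * A + K -> c / D - K / D / N <= A / N.
Proof.
  intros HD HN H. apply (Rmult_le_reg_r (D * N)); [now apply Rmult_lt_0_compat|].
  replace (A / N * (D * N)) with (D * A) by (field; lra).
  replace ((c / D - K / D / N) * (D * N)) with (N * c - K) by (field; lra). lra.
Qed.

Lemma is_lim_seq_avg_of_bounds (A : nat -> nat) (c D K : nat) : (0 < D)%nat ->
  (forall n, D * A n <= n * c + K /\ n * c <= D * A n + K)%nat ->
  is_lim_seq (fun n => INR (A (S n)) / INR (S n)) (INR c / INR D).
Proof.
  intros HD Hb. assert (HDr : 0 < INR D) by now apply lt_0_INR.
  apply (is_lim_seq_le_le (fun n => INR c / INR D - INR K / INR D / INR (S n)) _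
                          (fun n => INR c / INR D + INR K / INR D / INR (S n))).
  - intros n. destruct (Hb (S n)) as [Hup Hlow].
    assert (HN : 0 < INR (S n)) by apply lt_0_INR, Nat.lt_0_succ.
    split.
    + apply div_ge_of_mul_ge; [exact HDr | exact HN|].
      rewrite <- !mult_INR, <- plus_INR. now apply le_INR.
    + apply div_le_of_mul_le; [exact HDr | exact HN|].
      rewrite <- !mult_INR, <- plus_INR. now apply le_INR.
  - rewrite <- (Rminus_0_r (INR c / INR D)) at 1.
    apply is_lim_seq_minus'; [apply is_lim_seq_const | apply is_lim_seq_div_succ].
  - rewrite <- (Rplus_0_r (INR c / INR D)) at 1.
    apply is_lim_seq_plus'; [apply is_lim_seq_const | apply is_lim_seq_div_succ].
Qed.

Lemma is_lim_seq_avg_ge (A : nat -> nat) (v F K : nat) (l : Rbar) : (0 < F)%nat ->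
  (forall n, v * n <= F * A n + K)%nat ->
  is_lim_seq (fun n => INR (A (S n)) / INR (S n)) l -> Rbar_le (INR v / INR F) l.
Proof.
  intros HF Hb Hl. assert (HFr : 0 < INR F) by now apply lt_0_INR.
  apply (is_lim_seq_le (fun n => INR v / INR F - INR K / INR F / INR (S n))
                       (fun n => INR (A (S n)) / INR (S n))); [| | exact Hl].
  - intros n. apply div_ge_of_mul_ge; [exact HFr | apply lt_0_INR, Nat.lt_0_succ |].
    rewrite <- !mult_INR, <- plus_INR. apply le_INR. rewrite Nat.mul_comm. apply Hb.
  - rewrite <- (Rminus_0_r (INR v / INR F)) at 1.
    apply is_lim_seq_minus'; [apply is_lim_seq_const | apply is_lim_seq_div_succ].
Qed.

Theorem lemma5 (k : nat) (dr : nat -> dir) (lam mu : nat -> nat)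
  (Hvalid : valid_instance k lam mu) :
  exists s : schedule, optimal k dr lam mu s /\
    forall t, (1 <= t)%nat -> ~ (s t = AW /\ s (S t) = AW).
Proof.
  assert (Hlam : forall i, (i < k)%nat -> (1 <= lam i)%nat)
    by (intros i Hi; exact (proj1 (Hvalid i Hi))).
  destruct (min_cycle_value k dr lam mu Hlam) as [v0 [[s0 [o0 [i [j [Hc Hv0]]]]] Hmin]].
  destruct (repeat_cycle k dr lam mu Hlam s0 o0 i j Hc) as [s [o [K [Hs Hbounds]]]].
  pose proof Hc as [_ [Hij _]].
  set (F := fact (num_states k lam)) in *.
  set (c := cost_sum k dr lam mu s0 i (j - i)) in *.
  assert (Hval : INR c / INR (j - i) = INR v0 / INR F).
  { assert (0 < INR (j - i)) by (apply lt_0_INR; lia).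
    assert (0 < INR F) by apply lt_0_INR, lt_O_fact.
    apply (f_equal INR) in Hv0. rewrite !mult_INR in Hv0.
    field_simplify_eq; lra. }
  exists s. split; [|exact (regular_no_double_wait _ _ Hs)].
  split; [exact (regular_feasible _ _ Hs)|].
  exists (INR v0 / INR F). split.
  - rewrite <- Hval. apply (is_lim_seq_avg_of_bounds _ _ _ K); [lia | exact Hbounds].
  - intros s' l' Hf' Hl'.
    apply (is_lim_seq_avg_ge (cost_sum k dr lam mu s' 0) v0 F (v0 * S (num_states k lam)));
      [apply lt_O_fact | | exact Hl'].
    intros n. exact (feasible_cost_lower_bound k dr lam mu Hlam v0 Hmin s' n Hf').
Qed.
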